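(* Let $G$ be any finite forest (acyclic graph) with vertex set $[n]=\{1,\ldots,n\}$, let $H\subseteq[n]$ be arbitrary, and let $p\in(0,1)$. Then for all $u,v\in[n]$, \[ \mathbb{P}_{H,p}^G\big(u^+\leftrightarrow v^+\big)\ge \mathbb{P}_{H,p}^G\big(u^+\leftrightarrow v^-\big). \]
   Context: Bunkbed setup: for a finite graph $G$ with vertex labels $[n]$, take two copies $G^+$ and $G^-$, with vertex sets $[n]^+=\{1^+,\ldots,n^+\}$ and $[n]^-=\{1^-,\ldots,n^-\}$ and edge sets $E^+$ and $E^-$ (the copies of the edges of $G$). Given $H\subseteq[n]$, form the graph $G^\pm$ with vertex set $[n]^+\cup[n]^-$ and edge set $E^+\cup E^-\cup\{\{v^+,v^-\}: v\in H\}$. $\mathbb{P}^G_{H,p}$ is the law under which each edge of $E^+\cup E^-$ is open independently with probability $p$, and every edge $\{v^+,v^-\}$ with $v\in H$ is always open. The event $\{x\leftrightarrow y\}$ means there is a path of open edges from $x$ to $y$ in $G^\pm$. *)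

From HB Require Import structures.
From mathcomp Require Import all_boot all_order all_algebra.
Set Implicit Arguments. Unset Strict Implicit. Unset Printing Implicit Defensive.
Import Order.TTheory GRing.Theory Num.Theory.

Definition simple_graph (n : nat) (e : rel 'I_n) : Prop :=
  symmetric e /\ irreflexive e.

Definition forest (n : nat) (e : rel 'I_n) : Prop :=
  ~ exists s : seq 'I_n, [/\ uniq s, 2 < size s & cycle e s]%N.

(* Edges of the two copies G^+ (layer true) and G^- (layer false):
   (layer, (i, j)) with i < j and {i,j} an edge of G. *)
Definition bunk_edges (n : nat) (e : rel 'I_n) : {set bool * ('I_n * 'I_n)} :=
  [set x : bool * ('I_n * 'I_n) | ((x.2.1 < x.2.2)%N && e x.2.1 x.2.2)].

(* Bunkbed vertices: (true, v) = v^+, (false, v) = v^-.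
   Adjacency through open edges given the set w of open edges of E^+ u E^-,
   plus the always-open posts {v^+, v^-}, v in H. *)
Definition bunk_open_adj (n : nat) (H : {set 'I_n})
  (w : {set bool * ('I_n * 'I_n)}) : rel (bool * 'I_n) :=
  fun a b =>
    if a.1 == b.1 then ((a.1, (a.2, b.2)) \in w) || ((a.1, (b.2, a.2)) \in w)
    else (a.2 == b.2) && (a.2 \in H).

Definition bunk_conn (n : nat) (H : {set 'I_n})
  (w : {set bool * ('I_n * 'I_n)}) (x y : bool * 'I_n) : bool :=
  connect (bunk_open_adj H w) x y.

Definition bunk_prob (R : ringType) (n : nat) (e : rel 'I_n) (p : R)
  (A : {set bool * ('I_n * 'I_n)} -> bool) : R :=
  (\sum_(w : {set bool * ('I_n * 'I_n)} | (w \subset bunk_edges e) && A w)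
     (p ^+ #|w| * (1 - p) ^+ #|bunk_edges e :\: w|))%R.

From HB Require Import structures.
From mathcomp Require Import all_boot all_order all_algebra.
From mathcomp Require Import zify.
Import Order.TTheory GRing.Theory Num.Theory.
Set Implicit Arguments. Unset Strict Implicit. Unset Printing Implicit Defensive.

(* If u and v are not connected in G, then u^+ cannot reach v^-.  Otherwise let
   u = x_0, ..., x_k = v be the simple path joining them in the forest G.  Take a
   configuration in which u^+ reaches v^- but not v^+, and let x_j be the last path
   vertex with u^+ <-> x_j^+.  Then x_j^+ x_(j+1)^+ is closed, and since x_j x_(j+1)
   is the only edge of G leaving the component S of x_(j+1) in G - x_j x_(j+1), every
   open path from u^+ into the copies of S enters through x_j^- x_(j+1)^-.
   Exchanging the two layers above S preserves the product measure, leaves the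
   connections of u^+ to x_i^+/- unchanged for i <= j and swaps them for i > j.  It
   thus maps {u^+ <-> v^-, not u^+ <-> v^+} into {u^+ <-> v^+, not u^+ <-> v^-},
   injectively, since j is recovered from the image as the last i with
   u^+ <-> x_i^-. *)

Lemma connect_invariant (T : finType) (r : rel T) (P : pred T) x :
  P x -> (forall a b, r a b -> P a -> P b) -> forall y, connect r x y -> P y.
Proof.
move=> Px step _ /connectP[p r_p ->].
elim: p x r_p Px => //= z p IHp x /andP[rxz r_p] Px.
exact: IHp z r_p (step x z rxz Px).
Qed.

Lemma connect_homo (T T' : finType) (r : rel T) (r' : rel T') (f : T -> T') x y :
  (forall a b, r a b -> connect r' (f a) (f b)) ->
  connect r x y -> connect r' (f x) (f y).
Proof.
move=> r_r'; move: y; apply: connect_invariant => // a b /r_r' r'ab.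
by move/connect_trans; apply.
Qed.

Lemma connect_conj (T : finType) (r r' : rel T) (f : T -> T) :
  involutive f -> (forall x y, r' x y = r (f x) (f y)) ->
  forall x y, connect r' x y = connect r (f x) (f y).
Proof.
move=> fK r'E x y; apply/idP/idP => [|/(connect_homo (f := f))].
  by apply: connect_homo => a b; rewrite r'E => /connect1.
by rewrite !fK; apply=> a b rab; apply: connect1; rewrite r'E !fK.
Qed.

Section ConnectCut.
Variables (T : finType) (r : rel T) (X : {set T}) (p q : T).
Hypothesis r_sym : symmetric r.
Hypothesis r_cut : forall x y, r x y -> x \in X -> y \notin X -> x = p /\ y = q.

Lemma connect_cut s t : s \in X ->
  connect r s t =
    if t \in X then connect [rel x y in X | r x y] s t
    else [&& connect [rel x y in X | r x y] s p, r p q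
           & connect [rel x y in ~: X | r x y] q t].
Proof.
move=> sX; apply/idP/idP; move: t.
  apply: connect_invariant; first by rewrite sX connect0.
  move=> x y rxy; case xX: (x \in X); case yX: (y \in X).
  - by move/connect_trans; apply; apply: connect1; rewrite /= xX yX.
  - by have [x_p y_q] := r_cut rxy xX (negbT yX); subst=> ->; rewrite rxy connect0.
  - by rewrite r_sym in rxy; have [-> _] := r_cut rxy yX (negbT xX); case/andP.
  - case/and3P=> -> -> /connect_trans; apply; apply: connect1.
    by rewrite /= !inE xX yX.
move=> t; have within Y : subrel (connect [rel x y in Y | r x y]) (connect r).
  by apply: connect_sub => x y /andP[_ /connect1].
case: ifP => _; first exact: within.
case/and3P=> /within C1 /connect1 C2 /within C3.
exact: connect_trans (connect_trans C1 C2) C3.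
Qed.

End ConnectCut.

Section Sums.
Variables (R : numDomainType) (I : finType).
Local Open Scope ring_scope.

Lemma ler_sum_inj (P Q : pred I) (F : I -> R) (f : I -> I) :
  (forall i, Q i -> 0 <= F i) -> {in P &, injective f} ->
  (forall i, P i -> Q (f i) /\ F (f i) = F i) ->
  \sum_(i | P i) F i <= \sum_(i | Q i) F i.
Proof.
move=> F_ge0 f_inj f_PQ.
rewrite (eq_bigr (F \o f)) => [|i /f_PQ[]//].
rewrite -(big_imset F f_inj) [leRHS](bigID (mem (f @: P))) /= -[leLHS]addr0.
apply: lerD; last by apply: sumr_ge0 => i /andP[/F_ge0].
rewrite [leRHS](eq_bigl (mem (f @: P))) // => j /=.
apply/andP/idP => [[]//|jP]; split=> //.
by case/imsetP: jP => i iP ->; case: (f_PQ i iP).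
Qed.

Lemma ler_sum_setD (P A B : pred I) (F : I -> R) :
  \sum_(i | P i && A i && ~~ B i) F i <= \sum_(i | P i && B i && ~~ A i) F i ->
  \sum_(i | P i && A i) F i <= \sum_(i | P i && B i) F i.
Proof.
move=> le_diff; rewrite (bigID B (fun i => P i && A i)) [leRHS](bigID A) /=.
rewrite (eq_bigl (fun i => P i && B i && A i)) ?lerD2l // => i.
by rewrite andbAC.
Qed.

End Sums.

Definition last_index (P : pred nat) (k : nat) : nat := \max_(i < k.+1 | P i) i.

Lemma last_indexP (P : pred nat) k : P 0 ->
  [/\ P (last_index P k), last_index P k <= k
    & forall i, i <= k -> P i -> i <= last_index P k].
Proof.
move=> P0; rewrite /last_index (bigop.bigmax_eq_arg ord0) //.
case: arg_maxnP => //= i Pi i_max; split=> // [|m mk Pm]; first by rewrite -ltnS.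
exact: (i_max (Ordinal (mk : m < k.+1))).
Qed.

Lemma last_index_eq (P : pred nat) k j : j <= k -> P j ->
  (forall i, i <= k -> P i -> i <= j) -> last_index P k = j.
Proof.
move=> jk Pj j_max; apply/eqP; rewrite eqn_leq; apply/andP; split.
  by apply/bigmax_leqP => i /j_max; apply; rewrite -ltnS.
exact: (leq_bigmax_cond (Ordinal (jk : j < k.+1))).
Qed.

Section Bunkbed.
Variables (n : nat) (e : rel 'I_n) (H : {set 'I_n}).
Hypotheses (e_sym : symmetric e) (e_irr : irreflexive e) (e_forest : forest e).

Definition rem_edge (a b : 'I_n) : rel 'I_n :=
  [rel y z | e y z && ~~ ((y == a) && (z == b) || (y == b) && (z == a))].

Definition side (a b : 'I_n) : {set 'I_n} := [set y | connect (rem_edge a b) b y].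

Lemma side_root a b : b \in side a b.
Proof. by rewrite inE connect0. Qed.

Lemma side_connect a b y z :
  y \in side a b -> connect (rem_edge a b) y z -> z \in side a b.
Proof. by rewrite !inE => /connect_trans; apply. Qed.

Lemma notin_side a b : e a b -> a \notin side a b.
Proof.
move=> eab; apply/negP; rewrite inE => /connectP[p p_path].
case: (shortenP p_path) => q q_path q_uniq _ a_last.
apply: e_forest; exists (b :: q); split => //.
- case: q q_path q_uniq a_last => [|c [|d q]] //=.
    by move=> _ _ a_b; move: eab; rewrite a_b e_irr.
  by rewrite andbT => + _ a_c; rewrite /rem_edge /= -a_c !eqxx orbT andbF.
- rewrite /= rcons_path -a_last eab andbT.
  by apply: sub_path q_path => y z /andP[].
Qed.

Lemma side_cut a b y z :
  y \notin side a b -> z \in side a b -> e y z -> y = a /\ z = b.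
Proof.
move=> yS zS eyz.
case: (boolP ((y == a) && (z == b))) => [/andP[/eqP-> /eqP->] // | not_ab].
case: (boolP ((y == b) && (z == a))) => [/andP[/eqP y_b _] | not_ba].
  by move: yS; rewrite y_b side_root.
case/negP: yS; apply: side_connect zS (connect1 _).
rewrite /rem_edge /= e_sym eyz [(z == a) && _]andbC [(z == b) && _]andbC.
by rewrite negb_or not_ab not_ba.
Qed.

Local Notation config := {set bool * ('I_n * 'I_n)}.
Local Notation adj w := (bunk_open_adj H w).
Local Notation E := (bunk_edges e).
Implicit Types (S : {set 'I_n}) (w : config).

Lemma bunk_open_adj_sym w : symmetric (adj w).
Proof.
case=> l y [l' z]; rewrite /bunk_open_adj /= [l' == l]eq_sym [z == y]eq_sym.
by case: eqP => [->|_]; [rewrite orbC | case: eqP => // ->].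
Qed.

Lemma bunk_open_adj_edge w x y : w \subset E -> adj w x y ->
  x.2 = y.2 \/ x.1 = y.1 /\ e x.2 y.2.
Proof.
move/subsetP=> wE; case: x y => [l y] [l' z]; rewrite /bunk_open_adj /=.
case: eqP => [<-|_]; last by case/andP => /eqP ->; left.
by case/orP => /wE; rewrite inE /= => /andP[_ ?]; right; rewrite // e_sym.
Qed.

Lemma bunk_conn_proj w s t : w \subset E ->
  bunk_conn H w s t -> connect e s.2 t.2.
Proof.
move=> wE; apply: connect_homo => x y /(bunk_open_adj_edge wE).
by case=> [->|[_ /connect1]] //; rewrite connect0.
Qed.

Definition swap_edge (S : {set 'I_n}) (x : bool * ('I_n * 'I_n)) :=
  (((x.2.1 \in S) || (x.2.2 \in S)) (+) x.1, x.2).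

Definition swap_vertex (S : {set 'I_n}) (q : bool * 'I_n) := ((q.2 \in S) (+) q.1, q.2).

Definition swap_config (S : {set 'I_n}) (w : config) : config := swap_edge S @: w.

Lemma swap_edgeK S : involutive (swap_edge S).
Proof. by case=> l [y z]; rewrite /swap_edge /= addbA addbb. Qed.

Lemma swap_vertexK S : involutive (swap_vertex S).
Proof. by case=> l y; rewrite /swap_vertex /= addbA addbb. Qed.

Lemma mem_swap_config S w x : (x \in swap_config S w) = (swap_edge S x \in w).
Proof.
apply/imsetP/idP => [[y yw ->]|xw]; first by rewrite swap_edgeK.
by exists (swap_edge S x); rewrite ?swap_edgeK.
Qed.

Lemma swap_config_sub S w : w \subset E -> swap_config S w \subset E.
Proof.
by move/subsetP=> wE; apply/subsetP => x; rewrite mem_swap_config => /wE; rewrite !inE.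
Qed.

Lemma card_swap_config S w : #|swap_config S w| = #|w|.
Proof. exact/card_imset/can_inj/swap_edgeK. Qed.

Lemma adj_swap_config S w x y : (x.2 \in S) = (y.2 \in S) ->
  adj (swap_config S w) x y = adj w (swap_vertex S x) (swap_vertex S y).
Proof.
case: x y => [l y] [l' z] /= yz; rewrite /bunk_open_adj /= !mem_swap_config /swap_edge /=.
by rewrite -yz orbb; case: (y \in S); case: l; case: l' => //.
Qed.

Lemma adj_swap_config_cross S w l a b : a \notin S -> b \in S ->
  adj (swap_config S w) (l, a) (l, b) = adj w (~~ l, a) (~~ l, b).
Proof.
move=> aS bS; rewrite /bunk_open_adj /= !eqxx !mem_swap_config /swap_edge /= bS orbT.
by case: l.
Qed.

Section Reflection.
Variables (S : {set 'I_n}) (a b : 'I_n).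
Hypotheses (a_notin : a \notin S) (b_in : b \in S).
Hypothesis S_cut : forall y z, y \notin S -> z \in S -> e y z -> y = a /\ z = b.

Local Notation X := [set q : bool * 'I_n | q.2 \notin S].

Lemma bunk_open_adj_cut w l : w \subset E -> ~~ adj w (l, a) (l, b) ->
  forall x y, adj w x y -> x \in X -> y \notin X -> x = (~~ l, a) /\ y = (~~ l, b).
Proof.
move=> wE closed_ab [l1 y] [l2 z] adj_yz; rewrite !inE negbK /= => yS zS.
case: (bunk_open_adj_edge wE adj_yz) => /= [y_z | [l12 eyz]].
  by move: yS; rewrite y_z zS.
have [y_a z_b] := S_cut yS zS eyz; subst.
by case: l l2 closed_ab adj_yz => [] [] // /negP.
Qed.

Lemma connect_lower_cut w s t : w \subset E -> ~~ adj w (true, a) (true, b) ->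
  s.2 \notin S -> t.2 \in S -> connect (adj w) s t -> connect (adj w) s (false, a).
Proof.
move=> wE closed_ab sS tS.
have cut := connect_cut (bunk_open_adj_sym w) (bunk_open_adj_cut wE closed_ab).
by rewrite !cut ?inE ?sS ?tS ?a_notin //= => /and3P[].
Qed.

(* The cut is crossed only through (a^-, b^-) in [w], and only through (a^+, b^+)
   in the swapped configuration. *)
Lemma connect_swap_config w s t : w \subset E -> ~~ adj w (true, a) (true, b) ->
  s.2 \notin S -> connect (adj w) s (true, a) -> connect (adj w) s (false, a) ->
  connect (adj (swap_config S w)) s t = connect (adj w) s (swap_vertex S t).
Proof.
move=> wE closed_ab sS s_a1 s_a0.
have closed_ab' : ~~ adj (swap_config S w) (false, a) (false, b).
  by rewrite adj_swap_config_cross.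
have sX : s \in X by rewrite inE.
have cut := connect_cut (bunk_open_adj_sym w) (bunk_open_adj_cut wE closed_ab).
have cut' := connect_cut (bunk_open_adj_sym _)
  (bunk_open_adj_cut (swap_config_sub S wE) closed_ab').
have [s_a1' s_a0'] : connect [rel x y in X | adj w x y] s (true, a)
    /\ connect [rel x y in X | adj w x y] s (false, a).
  by move: s_a1 s_a0; rewrite !cut ?inE ?a_notin.
have in_X : [rel x y in X | adj (swap_config S w) x y] =2 [rel x y in X | adj w x y].
  move=> [l y] [l' z]; rewrite /= !inE.
  case: (boolP (y \in S)); case: (boolP (z \in S)) => //= zS yS.
  by rewrite adj_swap_config /swap_vertex //= (negbTE yS) (negbTE zS).
have out_X := connect_conj (swap_vertexK S) (r := [rel x y in ~: X | adj w x y])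
  (r' := [rel x y in ~: X | adj (swap_config S w) x y]).
rewrite cut' // cut //= !inE /=.
case: (boolP (t.2 \in S)) => /= tS.
  rewrite (eq_connect in_X) s_a1' s_a0' adj_swap_config_cross // out_X.
    by rewrite /swap_vertex /= b_in.
  move=> [l y] [l' z]; rewrite /= !inE !negbK.
  case: (boolP (y \in S)); case: (boolP (z \in S)) => //= zS yS.
  by rewrite adj_swap_config ?yS ?zS.
by case: t tS => l v /= vS; rewrite (eq_connect in_X) /swap_vertex /= (negbTE vS).
Qed.

End Reflection.

Definition bunk_weight (R : pzRingType) (p : R) w : R :=
  (p ^+ #|w| * (1 - p) ^+ #|E :\: w|)%R.

Lemma bunk_weight_ge0 (R : numDomainType) (p : R) w :
  (0 <= p <= 1)%R -> (0 <= bunk_weight p w)%R.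
Proof. by case/andP=> p_ge0 p_le1; rewrite mulr_ge0 ?exprn_ge0 ?subr_ge0. Qed.

Lemma bunk_weight_swap (R : pzRingType) (p : R) S w :
  w \subset E -> bunk_weight p (swap_config S w) = bunk_weight p w.
Proof.
move=> wE; rewrite /bunk_weight !cardsD card_swap_config.
by rewrite (setIidPr wE) (setIidPr (swap_config_sub S wE)) card_swap_config.
Qed.

Section Path.
Variables (u : 'I_n) (ps : seq 'I_n).
Hypotheses (ps_path : path e u ps) (ps_uniq : uniq (u :: ps)).
Local Notation k := (size ps).
Local Notation x i := (nth u (u :: ps) i).

Lemma path_vertex_eq l m : l <= k -> m <= k -> (x l == x m) = (l == m).
Proof. by move=> lk mk; rewrite nth_uniq. Qed.

Lemma path_edge i : i < k -> e (x i) (x i.+1).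
Proof. by move=> ik; apply: (pathP u ps_path). Qed.

Lemma connect_rem_edge_path i l m : i < k -> l <= m <= k -> (i < l) || (m <= i) ->
  connect (rem_edge (x i) (x i.+1)) (x l) (x m).
Proof.
move=> ik; elim: m => [|m IHm] /andP[lm mk] i_out.
  by move: lm; rewrite leqn0 => /eqP->.
case: (ltngtP l m.+1) lm => // [lm _ | <- _]; last exact: connect0.
have IHm' : connect (rem_edge (x i) (x i.+1)) (x l) (x m) by apply: IHm; lia.
apply: connect_trans IHm' (connect1 _).
apply/andP; split; first exact: path_edge.
by rewrite !path_vertex_eq; lia.
Qed.

Lemma mem_side_path i l : i < k -> l <= k ->
  (x l \in side (x i) (x i.+1)) = (i < l).
Proof.
move=> ik lk; case: ltnP => [il | li].
  by apply: side_connect (side_root _ _) (connect_rem_edge_path _ _ _); lia.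
apply/negP => l_side.
have i_side : x i \in side (x i) (x i.+1).
  by apply: side_connect l_side (connect_rem_edge_path ik _ _); lia.
by rewrite (negbTE (notin_side (path_edge ik))) in i_side.
Qed.

Definition reaches w (l : bool) (i : nat) : bool := bunk_conn H w (true, u) (l, x i).

Lemma cut_edge_closed w j :
  reaches w true j -> ~~ reaches w true j.+1 -> ~~ adj w (true, x j) (true, x j.+1).
Proof. by move=> u_j; apply: contra => /connect1; apply: connect_trans. Qed.

Section CutEdge.
Variables (w : config) (j : nat).
Hypotheses (wE : w \subset E) (jk : j < k).
Hypotheses (u_j : reaches w true j) (not_u_j1 : ~~ reaches w true j.+1).

Let closed_ab := cut_edge_closed u_j not_u_j1.
Let a_notin := notin_side (path_edge jk).
Let u_notin : (true, u).2 \notin side (x j) (x j.+1).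
Proof. by rewrite /= -[u]/(x 0) mem_side_path. Qed.

Lemma reaches_lower_at_cut : reaches w false k -> reaches w false j.
Proof.
apply: (connect_lower_cut a_notin _ wE closed_ab u_notin); first exact: side_cut.
by rewrite /= mem_side_path.
Qed.

Lemma reaches_swap_at_cut : reaches w false j -> forall l i, i <= k ->
  reaches (swap_config (side (x j) (x j.+1)) w) l i = reaches w ((j < i) (+) l) i.
Proof.
move=> u_j' l i ik; rewrite /reaches /bunk_conn.
rewrite (connect_swap_config a_notin (side_root _ _) _ _ wE closed_ab u_notin) //.
  by rewrite /swap_vertex /= mem_side_path.
exact: side_cut.
Qed.

End CutEdge.

Definition cut_swap w : config :=
  let j := last_index (reaches w true) k in swap_config (side (x j) (x j.+1)) w.

Lemma cut_swapP w : w \subset E -> reaches w false k -> ~~ reaches w true k ->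
  [/\ cut_swap w \subset E, reaches (cut_swap w) true k, ~~ reaches (cut_swap w) false k
    & last_index (reaches (cut_swap w) false) k = last_index (reaches w true) k].
Proof.
move=> wE u_k' not_u_k; rewrite /cut_swap.
have [] := last_indexP k (connect0 _ (true, u) : reaches w true 0).
set j := last_index _ k => u_j jk j_max.
have {}jk : j < k by rewrite ltn_neqAle jk andbT; apply: contraNneq not_u_k => <-.
have not_u_j1 : ~~ reaches w true j.+1 by apply/negP => /(j_max _ jk); rewrite ltnn.
have u_j' := reaches_lower_at_cut wE jk u_j not_u_j1 u_k'.
have swapE := reaches_swap_at_cut wE jk u_j not_u_j1 u_j'.
split; first exact: swap_config_sub.
- by rewrite swapE // jk.
- by rewrite swapE // jk.
apply: last_index_eq => [|//|i ik]; first exact: ltnW.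
  by rewrite swapE ?ltnn // ltnW.
rewrite swapE //; case: (ltnP j i) => //= ji /(j_max _ ik).
by rewrite leqNgt ji.
Qed.

Lemma bunk_cross_le_straight_path (R : numDomainType) (p : R) : (0 <= p <= 1)%R ->
  (\sum_(w : config | (w \subset E) && reaches w false k && ~~ reaches w true k)
      bunk_weight p w <=
   \sum_(w : config | (w \subset E) && reaches w true k && ~~ reaches w false k)
      bunk_weight p w)%R.
Proof.
move=> p01; apply: (ler_sum_inj (f := cut_swap)) => [w _|w1 w2|w].
- exact: bunk_weight_ge0.
- move=> /andP[/andP[w1E u_k1] not_u_k1] /andP[/andP[w2E u_k2] not_u_k2] eq_w.
  have [_ _ _ j1E] := cut_swapP w1E u_k1 not_u_k1.
  have [_ _ _ j2E] := cut_swapP w2E u_k2 not_u_k2.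
  have j12 : last_index (reaches w1 true) k = last_index (reaches w2 true) k.
    by rewrite -j1E -j2E eq_w.
  by move: eq_w; rewrite /cut_swap j12; apply/imset_inj/can_inj/swap_edgeK.
- case/andP=> /andP[wE u_k] not_u_k; have [-> -> -> _] := cut_swapP wE u_k not_u_k.
  by rewrite bunk_weight_swap.
Qed.

End Path.

Lemma bunk_cross_le_straight (R : numDomainType) (p : R) (u v : 'I_n) :
  (0 <= p <= 1)%R ->
  (\sum_(w : config | (w \subset E) && bunk_conn H w (true, u) (false, v)
                       && ~~ bunk_conn H w (true, u) (true, v)) bunk_weight p w <=
   \sum_(w : config | (w \subset E) && bunk_conn H w (true, u) (true, v)
                       && ~~ bunk_conn H w (true, u) (false, v)) bunk_weight p w)%R.
Proof.
move=> p01; have [/connectP[q q_path ->]|not_uv] := boolP (connect e u v).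
  case: (shortenP q_path) => ps ps_path ps_uniq _.
  rewrite -[last u ps](nth_last u (u :: ps)).
  exact: bunk_cross_le_straight_path.
rewrite big1 ?sumr_ge0 // => [w _|w /andP[/andP[wE /(bunk_conn_proj wE)]]].
  exact: bunk_weight_ge0.
by rewrite (negbTE not_uv).
Qed.

End Bunkbed.

Local Open Scope ring_scope.
Unset Implicit Arguments.
Set Strict Implicit.

Theorem mainTheorem1 (R : realFieldType) (n : nat) (e : rel 'I_n)
  (H : {set 'I_n}) (p : R) (u v : 'I_n) :
  simple_graph e -> forest e -> 0 < p < 1 ->
  bunk_prob e p (fun w => bunk_conn H w (true, u) (false, v))
    <= bunk_prob e p (fun w => bunk_conn H w (true, u) (true, v)).
Proof.
move=> [e_sym e_irr] e_forest /andP[p_gt0 p_lt1].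
apply: ler_sum_setD.
by apply: (bunk_cross_le_straight H e_sym e_irr e_forest); rewrite !ltW.
Qed.
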